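(* For $r\geq 2$, $0\leq \alpha\leq 1-\frac{1}{r}$ and every $n\ge 1$, $\lambda_{\alpha}(T_{n,r})\leq \left(1-\frac{1}{r}\right)n$.
   Context: $\lambda_\alpha(G)$ is the largest eigenvalue of $A_\alpha(G)=\alpha D(G)+(1-\alpha)A(G)$ ($A$ adjacency matrix, $D$ diagonal degree matrix). $T_{n,r}$ is the $r$-partite Turán graph on $n$ vertices (complete $r$-partite graph with part sizes differing by at most one). *)

From mathcomp Require Import all_boot all_order all_algebra.
From mathcomp Require Import reals.
Set Implicit Arguments. Unset Strict Implicit. Unset Printing Implicit Defensive.
Import Order.TTheory GRing.Theory Num.Theory.
Local Open Scope ring_scope.

(* Turan graph T_{n,r} on vertex set 'I_n: vertex i lies in part (i %% r);
   the r parts {i | i %% r = k} have sizes differing by at most one. *)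
Definition turan_adj (n r : nat) (i j : 'I_n) : bool := (i %% r != j %% r)%N.

Definition turan_deg (n r : nat) (i : 'I_n) : nat := #|[pred j | turan_adj r i j]|.

Definition turan_A (R : ringType) (n r : nat) : 'M[R]_n :=
  \matrix_(i, j) (turan_adj r i j)%:R.

Definition turan_D (R : ringType) (n r : nat) : 'M[R]_n :=
  \matrix_(i, j) ((i == j)%:R * (turan_deg r i)%:R).

Definition A_alpha_turan (R : comRingType) (alpha : R) (n r : nat) : 'M[R]_n :=
  alpha *: turan_D R n r + (1 - alpha) *: turan_A R n r.

From mathcomp Require Import all_boot all_order all_algebra.
From mathcomp Require Import reals.
From mathcomp Require Import ring lra.
Set Implicit Arguments. Unset Strict Implicit. Unset Printing Implicit Defensive.
Import Order.TTheory GRing.Theory Num.Theory.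
Local Open Scope ring_scope.

(* Suppose mu > (1 - 1/r) n, so that b := mu - alpha n > 0, and let v be an
   eigenvector.  The eigen-equations force v to be constant on every part of
   T_{n,r}, and then (b + N_i) v_i = (1 - alpha) \sum_j v_j for each vertex i,
   N_i being the size of its part; summing v_i yields the secular equation
   (1 - alpha) \sum_i 1/(b + N_i) = 1.  As \sum_i 1/N_i <= r, concavity of
   y |-> y/(b y + 1) gives \sum_i 1/(b + N_i) <= n/(b + n/r), hence
   b + n/r <= (1 - alpha) n, i.e. mu <= (1 - 1/r) n. *)

(* The tangent at y = 1/m of the concave map y |-> 1/(b + 1/y). *)
Lemma inv_add_le_tangent (R : realFieldType) (b x m : R) :
  0 <= b -> 0 < x -> 0 < m -> 1 / (b + x) <= (b + m ^+ 2 / x) / (b + m) ^+ 2.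
Proof.
move=> b_ge0 x_gt0 m_gt0.
have bx_gt0 : 0 < b + x by lra.
have bm_gt0 : 0 < (b + m) ^+ 2 by apply: exprn_gt0; lra.
have -> : b + m ^+ 2 / x = (b * x + m ^+ 2) / x by field; lra.
rewrite ler_pdivrMr // -mulrA -invfM mulrAC ler_pdivlMr; last exact: mulr_gt0.
rewrite mul1r; have := mulr_ge0 b_ge0 (sqr_ge0 (x - m)); nra.
Qed.

Lemma sum_inv_card_fiber (R : numFieldType) (T K : finType) (f : T -> K) :
  \sum_(x : T) 1 / #|[pred y | f x == f y]|%:R <= #|K|%:R :> R.
Proof.
rewrite (partition_big f xpredT) //=.
have -> : #|K|%:R = \sum_(k : K) (1 : R) by rewrite sumr_const.
apply: ler_sum => k _.
pose A := [pred y | k == f y].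
rewrite (eq_bigl (mem A)) => [|x]; last by rewrite !inE eq_sym.
rewrite (eq_bigr (fun _ => 1 / #|A|%:R)) => [|x /eqP <-]; last by [].
rewrite sumr_const; case: (posnP #|A|) => [->|A_gt0]; first by rewrite mulr0n ler01.
by rewrite -[_ *+ _]mulr_natr div1r mulVf // pnatr_eq0 -lt0n A_gt0.
Qed.

Lemma sum_inv_addr_le (R : realFieldType) (I : finType) (N : I -> nat) (b s : R) :
  0 <= b -> 0 < s -> (0 < #|I|)%N -> (forall i, 0 < N i)%N ->
  \sum_i 1 / (N i)%:R <= s ->
  \sum_i 1 / (b + (N i)%:R) <= #|I|%:R / (b + #|I|%:R / s).
Proof.
move=> b_ge0 s_gt0 I_gt0 N_gt0 sum_le.
set m := #|I|%:R / s.
have m_gt0 : 0 < m by rewrite divr_gt0 // ltr0n.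
have bm_gt0 : 0 < b + m by lra.
apply: (@le_trans _ _ (\sum_i (b + m ^+ 2 / (N i)%:R) / (b + m) ^+ 2)).
  by apply: ler_sum => i _; apply: inv_add_le_tangent; rewrite ?ltr0n.
rewrite -mulr_suml big_split /= sumr_const -mulr_sumr.
apply: (@le_trans _ _ ((b *+ #|I| + m ^+ 2 * s) / (b + m) ^+ 2)).
  rewrite ler_pM2r ?invr_gt0 ?exprn_gt0 // lerD2l.
  by rewrite ler_pM2l ?exprn_gt0 //; under eq_bigr do rewrite -div1r.
have -> : b *+ #|I| + m ^+ 2 * s = #|I|%:R * (b + m).
  by rewrite /m -mulr_natr; field; apply: lt0r_neq0.
by rewrite expr2 invfM mulrA mulfK // lt0r_neq0.
Qed.

Definition turan_part_size n (r : nat) (i : 'I_n) : nat :=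
  #|[pred j | ~~ turan_adj r i j]|.

Lemma turan_adjC n r (i j : 'I_n) : turan_adj r i j = turan_adj r j i.
Proof. by rewrite /turan_adj eq_sym. Qed.

Lemma turan_deg_add_part_size n r (i : 'I_n) :
  (turan_deg r i + turan_part_size r i)%N = n.
Proof.
rewrite /turan_deg /turan_part_size -[n in RHS]card_ord.
exact: cardC [pred j | turan_adj r i j].
Qed.

Lemma turan_part_size_gt0 n r (i : 'I_n) : (0 < turan_part_size r i)%N.
Proof. by apply/card_gt0P; exists i; rewrite inE /turan_adj eqxx. Qed.

Lemma sum_inv_turan_part_size (R : numFieldType) n r : (0 < r)%N ->
  \sum_(i : 'I_n) 1 / (turan_part_size r i)%:R <= r%:R :> R.
Proof.
move=> r_gt0; pose part (i : 'I_n) : 'I_r := Ordinal (ltn_pmod i r_gt0).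
rewrite (eq_bigr (fun i => 1 / #|[pred j | part i == part j]|%:R)) => [|i _].
  by rewrite -[X in _ <= X%:R]card_ord sum_inv_card_fiber.
by congr (1 / _%:R); apply: eq_card => j; rewrite !inE negbK -val_eqE.
Qed.

Lemma mulmx_A_alpha_turan (R : comNzRingType) (alpha : R) n r (v : 'rV[R]_n) i :
  (v *m A_alpha_turan alpha n r) 0 i =
  alpha * (turan_deg r i)%:R * v 0 i + (1 - alpha) * \sum_(j | turan_adj r j i) v 0 j.
Proof.
rewrite mxE; under eq_bigr do rewrite /A_alpha_turan !mxE mulrDr.
rewrite big_split /= (bigD1 i) //= big1 => [|j /negbTE ji]; last first.
  by rewrite ji !mul0r !mulr0.
rewrite eqxx addr0 mul1r mulrC mulr_sumr [in RHS]big_mkcond /=; congr (_ + _).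
by apply: eq_bigr => j _; case: turan_adj; rewrite ?mulr1 ?mulr0 // mulrC.
Qed.

Section TuranEigenvector.
Variables (R : realFieldType) (n r : nat) (alpha mu : R) (v : 'rV[R]_n).
Hypotheses (alpha_ge0 : 0 <= alpha) (alpha_n_lt : alpha * n%:R < mu)
  (eigen_v : v *m A_alpha_turan alpha n r = mu *: v).

Lemma turan_eigen_coef_gt0 (i : 'I_n) : 0 < mu - alpha * (turan_deg r i)%:R.
Proof.
have deg_le : (turan_deg r i <= n)%N.
  by rewrite -[X in (_ <= X)%N](turan_deg_add_part_size r i) leq_addr.
rewrite -(ler_nat R) in deg_le; rewrite subr_gt0.
exact: le_lt_trans (ler_wpM2l alpha_ge0 deg_le) alpha_n_lt.
Qed.

Lemma turan_eigenvector_row (i : 'I_n) :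
  (mu - alpha * (turan_deg r i)%:R) * v 0 i =
  (1 - alpha) * \sum_(j | turan_adj r j i) v 0 j.
Proof.
have := congr1 (fun u : 'rV_n => u 0 i) eigen_v.
by rewrite mulmx_A_alpha_turan mxE => row; rewrite mulrBl -row; ring.
Qed.

Lemma turan_eigenvector_const (i j : 'I_n) : ~~ turan_adj r i j -> v 0 i = v 0 j.
Proof.
rewrite negbK => /eqP same_part.
have adjE k : turan_adj r k i = turan_adj r k j by rewrite /turan_adj same_part.
have degE : turan_deg r i = turan_deg r j.
  by apply: eq_card => k; rewrite !inE turan_adjC adjE turan_adjC.
apply: (mulfI (lt0r_neq0 (turan_eigen_coef_gt0 i))).
by rewrite turan_eigenvector_row (eq_bigl _ _ adjE) -turan_eigenvector_row degE.
Qed.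

Lemma turan_eigenvector_part (i : 'I_n) :
  (mu - alpha * n%:R + (turan_part_size r i)%:R) * v 0 i =
  (1 - alpha) * \sum_j v 0 j.
Proof.
have part_sum : \sum_(j | ~~ turan_adj r j i) v 0 j = (turan_part_size r i)%:R * v 0 i.
  rewrite (eq_bigr (fun _ => v 0 i)) => [|j]; last first.
    by rewrite turan_adjC => /turan_eigenvector_const.
  rewrite (eq_bigl (mem [pred j | ~~ turan_adj r i j])) => [|j]; last first.
    by rewrite !inE turan_adjC.
  by rewrite sumr_const mulr_natl.
have degE : (turan_deg r i)%:R = n%:R - (turan_part_size r i)%:R :> R.
  by apply/eqP; rewrite eq_sym subr_eq -natrD turan_deg_add_part_size.
have := turan_eigenvector_row i.
rewrite degE (bigID (turan_adj r ^~ i) xpredT) /= part_sum => row_eq.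
by rewrite mulrDr -row_eq; ring.
Qed.

Lemma turan_eigen_secular : v != 0 ->
  (1 - alpha) * \sum_(i < n) 1 / (mu - alpha * n%:R + (turan_part_size r i)%:R) = 1.
Proof.
move=> v_neq0; set T := \sum_j v 0 j.
have coef_gt0 (i : 'I_n) : 0 < mu - alpha * n%:R + (turan_part_size r i)%:R.
  by have := ler0n R (turan_part_size r i); move: alpha_n_lt; lra.
have T_neq0 : T != 0.
  apply: contra v_neq0 => /eqP T0; apply/eqP/rowP => i; rewrite mxE.
  have /eqP := turan_eigenvector_part i.
  by rewrite -/T T0 mulr0 mulf_eq0 (negbTE (lt0r_neq0 (coef_gt0 i))) => /eqP.
have vE (i : 'I_n) :
    v 0 i = (1 - alpha) * T / (mu - alpha * n%:R + (turan_part_size r i)%:R).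
  by rewrite -(turan_eigenvector_part i) mulrC mulKf // lt0r_neq0.
apply: (mulIf T_neq0); rewrite mul1r {2}/T (eq_bigr _ (fun i _ => vE i)).
by rewrite -mulrA mulr_suml mulr_sumr; apply: eq_bigr => i _; ring.
Qed.

End TuranEigenvector.

Theorem lemma5p8 (R : realType) (r n : nat) (alpha : R) :
  (2 <= r)%N -> (1 <= n)%N ->
  0 <= alpha -> alpha <= 1 - 1 / r%:R ->
  forall mu : R, eigenvalue (A_alpha_turan alpha n r) mu ->
    mu <= (1 - 1 / r%:R) * n%:R.
Proof.
move=> r_ge2 n_ge1 alpha_ge0 alpha_le mu /eigenvalueP [v eigen_v v_neq0].
rewrite leNgt; apply/negP => mu_gt.
have r_gt0 : 0 < r%:R :> R by rewrite ltr0n (ltn_trans _ r_ge2).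
have n_gt0 : 0 < n%:R :> R by rewrite ltr0n.
have alpha_le1 : 0 <= 1 - alpha by have := divr_gt0 ltr01 r_gt0; lra.
have alpha_n_lt : alpha * n%:R < mu.
  exact: le_lt_trans (ler_wpM2r (ltW n_gt0) alpha_le) mu_gt.
set b := mu - alpha * n%:R.
have b_gt0 : 0 < b by rewrite subr_gt0.
have secular := turan_eigen_secular alpha_ge0 alpha_n_lt eigen_v v_neq0.
have := sum_inv_addr_le (ltW b_gt0) r_gt0 _ (turan_part_size_gt0 r)
  (sum_inv_turan_part_size R n (ltnW r_ge2)).
rewrite card_ord => /(_ n_ge1).
rewrite ler_pdivlMr => [sum_le|]; last by rewrite addr_gt0 ?divr_gt0.
have : b + n%:R / r%:R <= (1 - alpha) * n%:R.
  by have := ler_wpM2l alpha_le1 sum_le; rewrite mulrA secular mul1r.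
have : (1 - 1 / r%:R) * n%:R = n%:R - n%:R / r%:R :> R by ring.
rewrite /b; lra.
Qed.
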